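(* Let $G$ be a simple graph with $n$ vertices. Then $\gamma(G)=n-1$ if and only if $G$ is isomorphic to the path $P_n$ on $n$ vertices.
   Context: For a graph $G$ with vertex set $V$, let $X_G=\{x_u\mid u\in V\}$ be indeterminates and $L(G,X_G)$ the matrix with $L_{u,u}=x_u$ and $L_{u,v}=-m_{uv}$ ($u\neq v$), $m_{uv}$ the number of edges between $u$ and $v$. The $j$-critical ideal $I_j(G,X_G)\subseteq\mathbb{Z}[X_G]$ is generated by all $j\times j$ minors of $L(G,X_G)$. The algebraic co-rank is $\gamma(G)=\max\{j\mid I_j(G,X_G)=\mathbb{Z}[X_G]\}$. *)

From HB Require Import structures.
From mathcomp Require Import all_boot all_order all_fingroup all_algebra.
From mathcomp Require Import mpoly.
Set Implicit Arguments. Unset Strict Implicit. Unset Printing Implicit Defensive.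
Import Order.TTheory GRing.Theory Num.Theory.
Local Open Scope ring_scope.

Definition simple_graph (n : nat) (e : rel 'I_n) : Prop :=
  (forall u v, e u v = e v u) /\ (forall u, e u u = false).

Definition path_rel (n : nat) : rel 'I_n :=
  fun i j => ((i : nat).+1 == j) || ((j : nat).+1 == i).

Definition graph_iso (n : nat) (e e' : rel 'I_n) : Prop :=
  exists s : {perm 'I_n}, forall u v, e' (s u) (s v) = e u v.

Definition gen_laplacian (n : nat) (e : rel 'I_n) : 'M[{mpoly int[n]}]_n :=
  \matrix_(u, v) (if u == v then 'X_u else - ((e u v : nat)%:R)).

(* increasing maps 'I_j -> 'I_n: choices of j rows / columns *)
Definition incr_map (j n : nat) (f : {ffun 'I_j -> 'I_n}) : bool :=
  [forall a : 'I_j, forall b : 'I_j, (a < b)%N ==> (f a < f b)%N].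

Definition minor (n j : nat) (M : 'M[{mpoly int[n]}]_n)
  (f g : {ffun 'I_j -> 'I_n}) : {mpoly int[n]} :=
  \det (\matrix_(a, b) M (f a) (g b)).

Definition in_critical_ideal (n : nat) (e : rel 'I_n) (j : nat)
  (p : {mpoly int[n]}) : Prop :=
  exists c : {ffun 'I_j -> 'I_n} * {ffun 'I_j -> 'I_n} -> {mpoly int[n]},
    p = \sum_(fg | incr_map fg.1 && incr_map fg.2)
          c fg * minor (gen_laplacian e) fg.1 fg.2.

Definition critical_ideal_trivial (n : nat) (e : rel 'I_n) (j : nat) : Prop :=
  forall p : {mpoly int[n]}, in_critical_ideal e j p.

Definition is_algebraic_corank (n : nat) (e : rel 'I_n) (g : nat) : Prop :=
  critical_ideal_trivial e g /\
  forall j, critical_ideal_trivial e j -> (j <= g)%N.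

(* Reducing modulo 2 and specializing X_u to d_u in F_2 is a ring morphism
   Z[X_G] -> F_2 sending the minors of L(G, X_G) to those of the F_2-matrix
   M_d = diag(d) + A(G).  So I_n is never trivial (for d the degrees mod 2 the
   all-ones vector is in the kernel of M_d), and if I_(n-1) is trivial then every
   M_d has corank at most 1.
   Conversely every graph that is not a path has some M_d of corank at least 2, by
   induction on the number of vertices: for a disconnected graph take d = degrees and
   the indicator vectors of a union of components and of its complement; a connected
   non-path has a vertex x whose local complement with x deleted, G*x - x, is again
   not a path, and a two-dimensional kernel for G*x - x lifts to G by eliminating
   the row of x.  For the path itself, deleting the row of one end and the column of
   the other leaves a triangular matrix with -1 on the diagonal, so I_(n-1) is
   trivial. *)

From mathcomp Require Import all_boot all_order all_fingroup all_algebra.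
From mathcomp Require Import mpoly.
From Stdlib Require Import Classical.
From mathcomp Require Import ring zify.
Set Implicit Arguments. Unset Strict Implicit. Unset Printing Implicit Defensive.
Import GRing.Theory.

Section InducedSubgraphs.
Variable n : nat.
Implicit Types (S A : {set 'I_n}) (e : rel 'I_n) (u v w x : 'I_n).

Definition nbrs S e u := [set w in S | (w != u) && e u w].
Definition deg S e u := #|nbrs S e u|.

Definition closed_in S e A := forall u w, u \in A -> w \in S -> e u w -> w \in A.
Definition connected S e :=
  forall A, A \subset S -> closed_in S e A -> A = set0 \/ A = S.

Definition path_like S e := [/\ connected S e, forall u, u \in S -> deg S e u <= 2
  & S = set0 \/ exists2 u, u \in S & deg S e u <= 1].

Definition local_complement e x : rel 'I_n := fun u w => e u w (+) (e u x && e w x).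

Lemma in_nbrs S e u w : (w \in nbrs S e u) = [&& w \in S, w != u & e u w].
Proof. by rewrite inE. Qed.

Lemma symmetric_local_complement e x :
  ssrbool.symmetric e -> ssrbool.symmetric (local_complement e x).
Proof. by move=> sym_e u w; rewrite /local_complement sym_e andbC. Qed.

Lemma closed_inC S e A : ssrbool.symmetric e -> A \subset S -> closed_in S e A ->
  closed_in S e (S :\: A).
Proof.
move=> sym_e sAS clA u w; rewrite !inE => /andP[uA uS] wS euw; rewrite wS andbT.
by apply: contra uA => wA; apply: (clA w u) => //; rewrite sym_e.
Qed.

Lemma deg_lt_card S e u : u \in S -> deg S e u < #|S|.
Proof.
move=> uS; rewrite (cardsD1 u S) uS add1n ltnS; apply: subset_leq_card.
by apply/subsetP => w; rewrite in_nbrs !inE => /and3P[-> -> _].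
Qed.

Lemma deg_ge2 S e u a b : a != b -> a \in nbrs S e u -> b \in nbrs S e u ->
  2 <= deg S e u.
Proof.
move=> ab aN bN; have <- : #|[set a; b]| = 2 by rewrite cards2 ab.
apply: subset_leq_card.
by apply/subsetP => w /set2P[]->.
Qed.

Lemma nbrs_eq2 S e u a b : a != b -> a \in nbrs S e u -> b \in nbrs S e u ->
  deg S e u <= 2 -> nbrs S e u = [set a; b].
Proof.
move=> ab aN bN deg_u; apply/esym/eqP; rewrite eqEcard cards2 ab deg_u andbT.
by apply/subsetP => w /set2P[]->.
Qed.

Lemma nbrs_eq2_other S e u x : x \in nbrs S e u -> deg S e u = 2 ->
  exists a, [/\ a \in nbrs S e u, a != x & nbrs S e u = [set x; a]].
Proof.
move=> xN deg_u.
have /cards1P[a Na] : #|nbrs S e u :\ x| == 1.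
  by move: deg_u; rewrite /deg (cardsD1 x) xN add1n => -[->].
have : a \in nbrs S e u :\ x by rewrite Na inE.
rewrite in_setD1 => /andP[ax aN]; exists a; split => //.
by apply: nbrs_eq2; rewrite // ?deg_u // eq_sym.
Qed.

Lemma adj_of_nbrs2 S e u a b w : nbrs S e u = [set a; b] -> w \in S -> w != u ->
  e u w = (w == a) || (w == b).
Proof. by move=> Nu wS wu; rewrite -in_set2 -Nu in_nbrs wS wu. Qed.

Lemma nbrs_local_complement_nonadj S e x u : x != u -> ~~ e u x ->
  nbrs (S :\ x) (local_complement e x) u = nbrs S e u.
Proof.
move=> xu nux; apply/setP => w; rewrite !in_nbrs !inE /local_complement.
rewrite (negbTE nux) addbF; case: eqP => [->|//]; by rewrite (negbTE nux) !andbF.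
Qed.

Lemma nbrs_local_complement S e x a b : a \in S :\ x -> b \in S :\ x -> a != b ->
  e a b -> ~~ e a x || ~~ e b x -> b \in nbrs (S :\ x) (local_complement e x) a.
Proof.
move=> aS bS ab eab; rewrite in_nbrs bS eq_sym ab /local_complement eab /=.
by case: (e a x) => //= ->.
Qed.

Lemma connected_nonisolated S e u : connected S e -> u \in S -> 1 < #|S| ->
  0 < deg S e u.
Proof.
move=> conn uS S_gt1; rewrite lt0n; apply/negP => /eqP/card0_eq N0.
have clu : closed_in S e [set u].
  move=> a w /set1P-> wS euw; rewrite inE; apply: contraT => wu.
  by have := N0 w; rewrite in_nbrs wS wu euw.
have su : [set u] \subset S by rewrite sub1set.
case: (conn _ su clu) => [|Su]; first by move/setP/(_ u); rewrite !inE eqxx.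
by move: S_gt1; rewrite -Su cards1.
Qed.

Lemma not_path_like_deg3 S e u : u \in S -> 2 < deg S e u -> ~ path_like S e.
Proof. by move=> uS deg_u [_ deg_le2 _]; move: (deg_le2 u uS); rewrite leqNgt deg_u. Qed.

Lemma not_path_like_deg_ge2 S e u : u \in S -> (forall v, v \in S -> 2 <= deg S e v) ->
  ~ path_like S e.
Proof.
move=> uS deg_ge [_ _ [S0|[v vS deg_v]]]; first by move: uS; rewrite S0 inE.
by move: (deg_ge v vS); rewrite leqNgt ltnS deg_v.
Qed.

Lemma not_path_like_isolated S e u : u \in S -> deg S e u = 0 -> 1 < #|S| ->
  ~ path_like S e.
Proof.
by move=> uS deg_u S_gt1 [conn _ _]; move: (connected_nonisolated conn uS S_gt1); rewrite deg_u.
Qed.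

Lemma path_like_small S e : connected S e -> #|S| <= 2 -> path_like S e.
Proof.
move=> conn S_le2; split => // [u uS|]; first by have := deg_lt_card e uS; lia.
case: (set_0Vmem S) => [->|[u uS]]; [by left | right; exists u => //].
by have := deg_lt_card e uS; lia.
Qed.

Lemma not_path_like_lc_nonadj S e u x : u \in S -> 2 < deg S e u -> x != u -> ~~ e u x ->
  ~ path_like (S :\ x) (local_complement e x).
Proof.
move=> uS deg_u xu nux; apply: (@not_path_like_deg3 _ _ u); first by rewrite !inE eq_sym xu.
by rewrite /deg nbrs_local_complement_nonadj.
Qed.

Section Cycle.
Variables (S : {set 'I_n}) (e : rel 'I_n) (x : 'I_n).
Hypotheses (sym_e : ssrbool.symmetric e) (xS : x \in S).
Hypothesis deg2 : forall v, v \in S -> deg S e v = 2.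

Lemma deg_local_complement_cycle a b : nbrs S e x = [set a; b] -> a != b -> ~~ e a b ->
  2 <= deg (S :\ x) (local_complement e x) a.
Proof.
move=> Nx ab nab.
have : a \in nbrs S e x /\ b \in nbrs S e x by rewrite Nx !inE !eqxx orbT.
rewrite !in_nbrs => -[/and3P[aS ax xa] /and3P[bS bx xb]].
have xNa : x \in nbrs S e a by rewrite in_nbrs xS sym_e xa eq_sym ax.
have [a' [a'N a'x _]] := nbrs_eq2_other xNa (deg2 aS).
move: a'N; rewrite in_nbrs => /and3P[a'S a'a aa'].
have a'b : a' != b by apply: contraNneq nab => <-.
have na'x : ~~ e a' x by rewrite sym_e (adj_of_nbrs2 Nx) // (negbTE a'a) (negbTE a'b).
apply: (deg_ge2 a'b).
  by rewrite in_nbrs !inE a'x a'S a'a /local_complement aa' (negbTE na'x) andbF.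
rewrite in_nbrs !inE bx bS eq_sym ab /local_complement (negbTE nab).
by rewrite (sym_e a x) xa (sym_e b x) xb.
Qed.

Lemma not_path_like_lc_cycle : ~ path_like (S :\ x) (local_complement e x).
Proof.
have /cards2P[a [b [ab Nx]]] : #|nbrs S e x| == 2 by rewrite -/(deg S e x) deg2.
have : a \in nbrs S e x /\ b \in nbrs S e x by rewrite Nx !inE !eqxx orbT.
rewrite !in_nbrs => -[/and3P[aS ax xa] /and3P[bS bx xb]].
have aSx : a \in S :\ x by rewrite in_setD1 ax aS.
have adj_x w : w \in S -> w != x -> e w x = (w == a) || (w == b).
  by move=> wS wx; rewrite sym_e (adj_of_nbrs2 Nx).
case eab: (e a b); last first.
  apply: (not_path_like_deg_ge2 aSx) => v; rewrite in_setD1 => /andP[vx vS].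
  case: (eqVneq v a) => [->|va]; first by apply: (deg_local_complement_cycle Nx); rewrite ?eab.
  case: (eqVneq v b) => [->|vb].
    by apply: (deg_local_complement_cycle (b := a)); rewrite 1?setUC 1?eq_sym // sym_e eab.
  rewrite /deg nbrs_local_complement_nonadj 1?eq_sym ?adj_x ?(negbTE va) ?(negbTE vb) //.
  by rewrite -/(deg S e v) deg2.
have Na : nbrs S e a = [set x; b].
  apply: nbrs_eq2; rewrite ?deg2 // ?in_nbrs ?xS ?bS 1?eq_sym ?ax ?ab //.
  by rewrite sym_e xa.
apply: (not_path_like_isolated aSx).
  apply/eqP; rewrite cards_eq0; apply/eqP/setP => w; rewrite in_nbrs !inE /local_complement.
  case: (eqVneq w x) => //= wx; case wS: (w \in S) => //=; case: (eqVneq w a) => //= wa.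
  rewrite (adj_of_nbrs2 Na) // (sym_e a x) xa adj_x // (negbTE wx) (negbTE wa).
  by case: (w == b).
have : [set a; b] \subset S :\ x by apply/subsetP => w /set2P[]->; rewrite in_setD1 ?ax ?bx.
by move/subset_leq_card; rewrite cards2 ab.
Qed.

End Cycle.

Section Dominating.
Variables (S : {set 'I_n}) (e : rel 'I_n) (u : 'I_n).
Hypotheses (sym_e : ssrbool.symmetric e) (uS : u \in S).
Hypothesis dom_u : forall y, y \in S -> y != u -> e u y.

Lemma local_complement_dominating v w : v \in S :\ u -> w \in S :\ u ->
  local_complement e u v w = ~~ e v w.
Proof.
rewrite !in_setD1 => /andP[vu vS] /andP[wu wS].
by rewrite /local_complement (sym_e v u) (sym_e w u) !dom_u // addbT.
Qed.

Lemma not_path_like_lc_dominating2 v : 2 < #|S| -> v \in S :\ u ->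
  (forall y, y \in S -> y != v -> e v y) -> ~ path_like (S :\ u) (local_complement e u).
Proof.
move=> S_gt2 vSu dom_v; apply: (not_path_like_isolated vSu).
  apply/eqP; rewrite cards_eq0; apply/eqP/setP => w; rewrite in_set0 in_nbrs.
  apply/negP => /and3P[wSu wv].
  by rewrite local_complement_dominating // dom_v //; move: wSu; rewrite in_setD1 => /andP[].
by move: S_gt2; rewrite (cardsD1 u S) uS.
Qed.

Lemma deg_local_complement_dominating v : v \in S :\ u ->
  #|S| - 2 <= deg (S :\ u) (local_complement e u) v + (deg S e v - 1).
Proof.
move=> vSu; move: (vSu); rewrite in_setD1 => /andP[vu vS].
have uNv : u \in nbrs S e v by rewrite in_nbrs uS eq_sym vu sym_e dom_u.
have -> : deg S e v - 1 = #|nbrs S e v :\ u|.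
  by rewrite /deg (cardsD1 u (nbrs S e v)) uNv add1n subn1.
have -> : #|S| - 2 = #|S :\ u :\ v|.
  by have := cardsD1 u S; have := cardsD1 v (S :\ u); rewrite uS vSu !add1n => -> ->; rewrite subn2.
apply: leq_trans (leq_card_setU _ _); apply: subset_leq_card; apply/subsetP => w.
rewrite !in_setD1 => /and3P[wv wu wS]; rewrite in_setU in_setD1 !in_nbrs in_setD1 wu wv wS /=.
by rewrite local_complement_dominating ?in_setD1 ?wu ?vu //; case: (e v w).
Qed.

End Dominating.

Lemma exists_not_path_like_lc_triangle S e u v w : ssrbool.symmetric e -> #|S| = 4 ->
  [/\ u \in S, v \in S & w \in S] -> [/\ u != v, u != w & v != w] ->
  e u v -> e u w -> nbrs S e v = [set u; w] -> nbrs S e w = [set u; v] ->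
  exists2 t, t \in S & ~ path_like (S :\ t) (local_complement e t).
Proof.
move=> sym_e S4 [uS vS wS] [uv uw vw] euv euw Nv Nw.
have uSu : u \notin S :\ u by rewrite !inE eqxx.
have vSu : v \in S :\ u by rewrite in_setD1 eq_sym uv.
have wSuv : w \in S :\ u :\ v by rewrite !in_setD1 eq_sym vw eq_sym uw.
have /cards1P[t Nt] : #|S :\ u :\ v :\ w| == 1.
  have := cardsD1 u S; have := cardsD1 v (S :\ u); have := cardsD1 w (S :\ u :\ v).
  by rewrite uS vSu wSuv S4 !add1n => -> -> [->].
have : t \in S :\ u :\ v :\ w by rewrite Nt inE.
rewrite !in_setD1 => /and4P[tw tv tu tS].
have tuvw y : y \in S :\ t -> y \in [set u; v; w].
  rewrite in_setD1 => /andP[yt yS]; rewrite !inE; apply: contraR yt => /norP[/norP[yu yv] yw].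
  by rewrite -in_set1 -Nt !in_setD1 yu yv yw yS.
have nvt : ~~ e v t by rewrite (adj_of_nbrs2 Nv) ?(negbTE tu) ?(negbTE tw).
have nwt : ~~ e w t by rewrite (adj_of_nbrs2 Nw) ?(negbTE tu) ?(negbTE tv).
have evw : e v w by rewrite (adj_of_nbrs2 Nv) ?eqxx ?orbT // eq_sym.
have [uSt vSt wSt] : [/\ u \in S :\ t, v \in S :\ t & w \in S :\ t].
  by rewrite !in_setD1 uS vS wS -!(eq_sym t) tu tv tw.
exists t => //; apply: (not_path_like_deg_ge2 uSt) => y /tuvw; rewrite !inE.
have [evu ewu ewv] : [/\ e v u, e w u & e w v] by split; rewrite sym_e.
have [vu wu wv] : [/\ v != u, w != u & w != v] by split; rewrite eq_sym.
case/orP => [/orP[]|] /eqP->; [apply: (deg_ge2 vw) | apply: (deg_ge2 uw) | apply: (deg_ge2 uv)];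
  by apply: nbrs_local_complement; rewrite // ?nvt ?nwt ?orbT.
Qed.

Lemma exists_not_path_like_lc_dominating S e u : ssrbool.symmetric e -> u \in S ->
  3 < #|S| -> (forall y, y \in S -> y != u -> e u y) ->
  (forall v, v \in S :\ u -> deg S e v <= 2) ->
  exists2 x, x \in S & ~ path_like (S :\ x) (local_complement e x).
Proof.
move=> sym_e uS S_gt3 dom_u deg_le2.
have [v0 v0Su] : exists v, v \in S :\ u.
  apply/set0Pn; rewrite -card_gt0.
  by move: S_gt3; rewrite (cardsD1 u S) uS add1n ltnS => /ltnW/ltnW.
case: (classic (forall v, v \in S :\ u -> 2 <= deg (S :\ u) (local_complement e u) v)).
  by exists u => //; apply: (not_path_like_deg_ge2 v0Su).
move=> /not_all_ex_not[v not_deg_v]; have [vSu deg_v] := imply_to_and _ _ not_deg_v.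
have key := deg_local_complement_dominating sym_e uS dom_u vSu.
have [S4 deg_v2] : #|S| = 4 /\ deg S e v = 2 by have := deg_le2 v vSu; lia.
move: (vSu); rewrite in_setD1 => /andP[vu vS].
have uNv : u \in nbrs S e v by rewrite in_nbrs uS eq_sym vu sym_e dom_u.
have [w [wNv wu Nv]] := nbrs_eq2_other uNv deg_v2.
move: wNv; rewrite in_nbrs => /and3P[wS wv evw].
have uNw : u \in nbrs S e w by rewrite in_nbrs uS eq_sym wu sym_e dom_u.
have vNw : v \in nbrs S e w by rewrite in_nbrs vS eq_sym wv sym_e.
have Nw : nbrs S e w = [set u; v].
  by apply: nbrs_eq2; rewrite ?deg_le2 ?in_setD1 ?wu // eq_sym.
apply: (exists_not_path_like_lc_triangle sym_e S4 _ _ (dom_u v vS vu) (dom_u w wS wu) Nv Nw).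
  by split.
by split; rewrite // eq_sym.
Qed.

Lemma exists_not_path_like_lc S e : ssrbool.symmetric e -> connected S e -> 2 < #|S| ->
  ~ path_like S e -> exists2 x, x \in S & ~ path_like (S :\ x) (local_complement e x).
Proof.
move=> sym_e conn S_gt2 not_path.
case: (classic (exists u, [/\ u \in S, 2 < deg S e u & exists2 x, x \in S & x != u /\ ~~ e u x])).
  move=> [u [uS deg_u [x xS [xu nux]]]].
  by exists x => //; apply: (not_path_like_lc_nonadj uS deg_u xu nux).
move=> not_nonadj.
have dom v : v \in S -> 2 < deg S e v -> forall y, y \in S -> y != v -> e v y.
  move=> vS deg_v y yS yv; apply: NNPP => nvy; apply: not_nonadj.
  by exists v; split => //; exists y => //; split => //; apply/negP.
case: (classic (exists2 u, u \in S & 2 < deg S e u)) => [[u uS deg_u]|no_deg3].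
  have S_gt3 : 3 < #|S| by apply: leq_trans (deg_lt_card e uS).
  case: (classic (exists2 v, v \in S :\ u & 2 < deg S e v)) => [[v vSu deg_v]|no_deg3'].
    move: (vSu); rewrite in_setD1 => /andP[_ vS]; exists u => //.
    exact: (not_path_like_lc_dominating2 sym_e uS (dom u uS deg_u) S_gt2 vSu (dom v vS deg_v)).
  apply: (exists_not_path_like_lc_dominating sym_e uS S_gt3 (dom u uS deg_u)) => v vSu.
  by rewrite leqNgt; apply/negP => deg_v; apply: no_deg3'; exists v.
have deg_le2 v : v \in S -> deg S e v <= 2.
  by move=> vS; rewrite leqNgt; apply/negP => deg_v; apply: no_deg3; exists v.
have [x xS] : exists x, x \in S by apply/set0Pn; rewrite -card_gt0; apply: ltnW (ltnW S_gt2).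
exists x => //; apply: not_path_like_lc_cycle => // v vS; apply/eqP; rewrite eqn_leq deg_le2 //=.
rewrite ltnNge; apply/negP => deg_v; apply: not_path; split => //; right; by exists v.
Qed.

Lemma connected_delete_leaf S e x y : ssrbool.symmetric e -> connected S e -> x \in S ->
  nbrs S e x = [set y] -> connected (S :\ x) e.
Proof.
move=> sym_e conn xS Nx A sA clA.
have : y \in nbrs S e x by rewrite Nx inE.
rewrite in_nbrs => /and3P[yS yx exy].
have xA : x \notin A by apply/negP => /(subsetP sA); rewrite !inE eqxx.
have AS : A \subset S by apply: subset_trans sA (subsetDl _ _).
have Nx_eq w : w \in S -> e x w -> w != x -> w = y.
  by move=> wS exw wx; apply/set1P; rewrite -Nx in_nbrs wS wx.
case yA: (y \in A).
  have xAS : x |: A \subset S by rewrite subUset sub1set xS AS.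
  have clxA : closed_in S e (x |: A).
    move=> u w; rewrite !in_setU1 => /orP[/eqP->|uA] wS euw; case: (eqVneq w x) => //= wx.
      by rewrite (Nx_eq w).
    by apply: (clA u w uA) => //; rewrite in_setD1 wx wS.
  case: (conn _ xAS clxA) => [/setP/(_ x)|xA_S]; first by rewrite !inE eqxx.
  right; apply/eqP; rewrite eqEsubset sA; apply/subsetP => v; rewrite in_setD1.
  by case/andP=> vx; rewrite -xA_S in_setU1 (negbTE vx).
have clA' : closed_in S e A.
  move=> u w uA wS euw; case: (eqVneq w x) => [wx|wx]; last first.
    by apply: (clA u w uA) => //; rewrite in_setD1 wx wS.
  move: (subsetP sA u uA); rewrite in_setD1 => /andP[ux uS].
  by move: uA; rewrite (Nx_eq u) ?yA // sym_e -wx.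
case: (conn _ AS clA') => [->|AeS]; first by left.
by move: xA; rewrite AeS xS.
Qed.

Lemma path_like_delete_leaf S e x y : ssrbool.symmetric e -> path_like S e -> x \in S ->
  nbrs S e x = [set y] -> path_like (S :\ x) e /\ deg (S :\ x) e y <= 1.
Proof.
move=> sym_e [conn deg_le2 _] xS Nx.
have : y \in nbrs S e x by rewrite Nx inE.
rewrite in_nbrs => /and3P[yS yx exy].
have deg_sub u : deg (S :\ x) e u <= deg S e u - (x \in nbrs S e u).
  rewrite /deg (cardsD1 x (nbrs S e u)) addKn; apply: subset_leq_card.
  by apply/subsetP => w; rewrite in_setD1 !in_nbrs in_setD1 => /and3P[/andP[-> ->] -> ->].
have deg_y : deg (S :\ x) e y <= 1.
  have xNy : x \in nbrs S e y by rewrite in_nbrs xS eq_sym yx sym_e exy.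
  by apply: leq_trans (deg_sub y) _; rewrite xNy leq_subLR; exact: deg_le2.
split=> //; split; first exact: connected_delete_leaf conn xS Nx.
  move=> u; rewrite in_setD1 => /andP[_ uS].
  exact: leq_trans (deg_sub u) (leq_trans (leq_subr _ _) (deg_le2 u uS)).
by right; exists y; rewrite // in_setD1 yx.
Qed.

Lemma path_like_enum S e x : ssrbool.symmetric e -> path_like S e -> x \in S ->
  deg S e x <= 1 -> exists p : seq 'I_n, [/\ uniq p, head x p = x, p =i S &
    forall i j, i < size p -> j < size p -> i != j ->
      e (nth x p i) (nth x p j) = (i.+1 == j) || (j.+1 == i)].
Proof.
move=> sym_e; have [k] := ubnP #|S|; elim: k S x => // k IH S x S_lt path_S xS deg_x.
have [S_le1|S_gt1] := leqP #|S| 1.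
  have Sx : S = [set x] by apply/eqP; rewrite eq_sym eqEcard sub1set xS cards1.
  by exists [:: x]; split=> // [v|[|i] [|j]] //; rewrite Sx !inE.
have /cards1P[y Nx] : #|nbrs S e x| == 1.
  by rewrite eqn_leq deg_x; case: path_S => conn _ _; exact: connected_nonisolated.
have [path_Sx deg_y] := path_like_delete_leaf sym_e path_S xS Nx.
have : y \in nbrs S e x by rewrite Nx inE.
rewrite in_nbrs => /and3P[yS yx exy].
have ySx : y \in S :\ x by rewrite in_setD1 yx yS.
have [|p [up hp mp adj_p]] := IH (S :\ x) y _ path_Sx ySx deg_y.
  by move: S_lt; rewrite (cardsD1 x S) xS.
have exv v : v \in S :\ x -> e x v = (v == y).
  by rewrite in_setD1 => /andP[vx vS]; rewrite -in_set1 -Nx in_nbrs vS vx.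
have p_gt0 : 0 < size p by case: p mp {hp up adj_p} => // /(_ y); rewrite ySx.
have hp' : nth y p 0 = y := hp.
have nth_y j : j < size p -> (nth x p j == y) = (j == 0).
  by move=> jp; rewrite (set_nth_default y) // -[y in _ == y]hp' nth_uniq.
have nth_Sx j : j < size p -> nth x p j \in S :\ x by move=> jp; rewrite -mp mem_nth.
exists (x :: p); split => //.
- by rewrite /= up andbT mp !inE eqxx.
- by move=> v; rewrite inE mp in_setD1; case: eqP => [->|].
- move=> [|i] [|j] //= ip jp ij.
  + by rewrite exv ?nth_Sx ?nth_y //; case: j {ip jp ij}.
  + by rewrite sym_e exv ?nth_Sx ?nth_y //; case: i {ip jp ij}.
  + by rewrite [nth x p i](set_nth_default y) // [nth x p j](set_nth_default y) // adj_p.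
Qed.

Lemma path_like_graph_iso e : simple_graph e -> path_like setT e -> graph_iso e (@path_rel n).
Proof.
move=> [sym_e irr_e] path_e; case: (path_e) => _ _ [T0|[x _ deg_x]].
  by exists 1%g => u; move: (in_setT u); rewrite T0 inE.
have [p [up _ mp adj_p]] := path_like_enum sym_e path_e (in_setT x) deg_x.
have size_p : size p = n by rewrite -(card_uniqP up) (eq_card mp) cardsT card_ord.
have index_lt u : index u p < n by rewrite -[n in _ < n]size_p index_mem mp in_setT.
pose pos u := Ordinal (index_lt u).
have nth_pos u : nth x p (pos u) = u by rewrite nth_index ?mp ?in_setT.
have pos_inj : injective pos by move=> u v /(congr1 (nth x p \o val)) /=; rewrite !nth_pos.
exists (perm pos_inj) => u v; rewrite !permE.
case: (eqVneq u v) => [<-|uv]; first by rewrite irr_e /path_rel orbb gtn_eqF.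
have -> : e u v = e (nth x p (pos u)) (nth x p (pos v)) by rewrite !nth_pos.
by rewrite adj_p ?size_p // (inj_eq val_inj) (inj_eq pos_inj).
Qed.

End InducedSubgraphs.

Local Open Scope ring_scope.

Lemma F2_pchar : 2%N \in [pchar 'F_2]. Proof. exact: pchar_Fp. Qed.

Lemma F2_natr_addb (a b : bool) : ((a (+) b)%:R : 'F_2) = a%:R + b%:R.
Proof. by case: a; case: b; rewrite ?addr0 ?add0r ?(addrr_pchar2 F2_pchar). Qed.

Lemma F2_eq1 (x : 'F_2) : x != 0 -> x = 1.
Proof. by case: x => [[|[|m]] lt] //= _; apply: val_inj. Qed.

Section Mod2Kernel.
Variable n : nat.
Implicit Types (S A : {set 'I_n}) (e : rel 'I_n) (u w x : 'I_n) (d z : 'I_n -> 'F_2).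

(* z is supported on S and lies in the kernel of diag(d) + A(G[S]) over F_2. *)
Definition mod2_kernel S e d z := (forall u, u \notin S -> z u = 0) /\
  forall u, u \in S -> d u * z u + \sum_(w in S | w != u) (e u w)%:R * z w = 0.

(* Over F_2 two distinct nonzero vectors are linearly independent. *)
Definition mod2_corank2 S e := exists d z1 z2,
  [/\ mod2_kernel S e d z1, mod2_kernel S e d z2, exists u, z1 u != 0,
      exists u, z2 u != 0 & exists u, z1 u != z2 u].

Lemma sum_adj_deg S e u : \sum_(w in S | w != u) ((e u w)%:R : 'F_2) = (deg S e u)%:R.
Proof.
rewrite /deg -sum1_card natr_sum [RHS]big_mkcond [LHS]big_mkcond /=.
by apply: eq_bigr => w _; rewrite in_nbrs; case: (w \in S) (w != u) (e u w) => [] [] [].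
Qed.

Lemma mod2_kernel_closed S e A : ssrbool.symmetric e -> A \subset S -> closed_in S e A ->
  mod2_kernel S e (fun u => (deg S e u)%:R) (fun u => (u \in A)%:R).
Proof.
move=> sym_e sAS clA; split=> u uS.
  by case uA: (u \in A) => //; move/negP: uS; case; exact: (subsetP sAS).
case uA: (u \in A).
  rewrite mulr1 (eq_bigr (fun w => (e u w)%:R)) ?sum_adj_deg ?(addrr_pchar2 F2_pchar) //.
  move=> w /andP[wS _]; case euw: (e u w); last by rewrite mul0r.
  by rewrite (clA u w uA wS euw) mulr1.
rewrite mulr0 add0r big1 // => w /andP[wS _]; case wA: (w \in A); last by rewrite mulr0.
case euw: (e u w); last by rewrite mul0r.
by move: uA; rewrite (clA w u wA uS) // sym_e.
Qed.

Lemma mod2_corank2_disconnected S e : ssrbool.symmetric e -> ~ connected S e -> mod2_corank2 S e.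
Proof.
move=> sym_e /not_all_ex_not[A not_conn].
have [sAS not_conn'] := imply_to_and _ _ not_conn.
have [clA not_triv] := imply_to_and _ _ not_conn'.
have [A0 AS] := not_or_and _ _ not_triv.
have /set0Pn[a aA] : A != set0 by apply/eqP.
have /set0Pn[b bSA] : S :\: A != set0.
  by rewrite setD_eq0; apply/negP => sSA; apply: AS; apply/eqP; rewrite eqEsubset sAS.
exists (fun u => (deg S e u)%:R), (fun u => (u \in A)%:R), (fun u => (u \in S :\: A)%:R).
split; first exact: mod2_kernel_closed.
- by apply: mod2_kernel_closed => //; [exact: subsetDl | exact: closed_inC].
- by exists a; rewrite aA oner_eq0.
- by exists b; rewrite bSA oner_eq0.
- by exists a; rewrite aA inE aA.
Qed.

(* The value at x is forced by the row of x. *)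
Definition kernel_lift S e x z u :=
  if u == x then \sum_(w in S | w != x) (e x w)%:R * z w else z u.

Lemma mod2_kernel_lift S e x d z : ssrbool.symmetric e -> x \in S ->
  mod2_kernel (S :\ x) (local_complement e x) d z ->
  mod2_kernel S e (fun u => if u == x then 1 else d u + (e u x)%:R) (kernel_lift S e x z).
Proof.
move=> sym_e xS [z0 zker]; split=> u uS; rewrite /kernel_lift.
  case: eqP => [ux|_]; first by rewrite ux xS in uS.
  by apply: z0; rewrite in_setD1 (negbTE uS) andbF.
case: (eqVneq u x) => [->|ux].
  rewrite mul1r [X in _ + X](eq_bigr (fun w => (e x w)%:R * z w)) ?(addrr_pchar2 F2_pchar) //.
  by move=> w /andP[_ /negbTE ->].
set zx := \sum_(w in S | w != x) _.
have uSx : u \in S :\ x by rewrite in_setD1 ux uS.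
have split_u : \sum_(w in S | w != u) (e u w)%:R * (if w == x then zx else z w)
    = (e u x)%:R * zx + \sum_(w in S :\ x | w != u) (e u w)%:R * z w.
  rewrite (bigD1 x) /= ?xS 1?eq_sym // eqxx; congr (_ + _).
  apply: eq_big => [w|w /andP[_ /negbTE ->]] //; rewrite in_setD1.
  by case: (w \in S) (w == x) (w == u) => [] [] [].
have split_x : zx = (e x u)%:R * z u + \sum_(w in S :\ x | w != u) (e x w)%:R * z w.
  rewrite /zx (bigD1 u) /= ?uS //; congr (_ + _); apply: eq_bigl => w.
  by rewrite in_setD1; case: (w \in S) (w == x) (w == u) => [] [] [].
(* Row u is row u of the system of G*x - x plus e(u, x) times the defining row of zx;
   the remaining terms cancel in characteristic 2. *)
have := zker u uSx; rewrite split_u split_x (sym_e x u).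
rewrite (eq_bigr (fun w => (e u w)%:R * z w + (e u x)%:R * ((e x w)%:R * z w))); last first.
  by move=> w _; rewrite /local_complement F2_natr_addb -mulnb natrM (sym_e w x) mulrDl mulrA.
rewrite big_split /= -mulr_sumr; set a : 'F_2 := (e u x)%:R.
set s1 := \sum_(_ in _ | _) _ * z _; set s2 := \sum_(_ in _ | _) _ * z _ => ker_u.
have -> : (d u + a) * z u + (a * (a * z u + s2) + s1)
    = (d u * z u + (s1 + a * s2)) + (a * z u + a * a * z u) by ring.
by rewrite ker_u add0r -natrM mulnb andbb (addrr_pchar2 F2_pchar).
Qed.

Lemma mod2_corank2_lift S e x : ssrbool.symmetric e -> x \in S ->
  mod2_corank2 (S :\ x) (local_complement e x) -> mod2_corank2 S e.
Proof.
move=> sym_e xS [d [z1 [z2 [k1 k2 [u1 nz1] [u2 nz2] [u12 nz12]]]]].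
have xSx : x \notin S :\ x by rewrite !inE eqxx.
have [z1x z2x] := (k1.1 x xSx, k2.1 x xSx).
have [u1x u2x u12x] : [/\ u1 != x, u2 != x & u12 != x].
  by split; [move: nz1 | move: nz2 | move: nz12]; apply: contraNneq => ->; rewrite ?z1x ?z2x.
have lift_off z u : u != x -> kernel_lift S e x z u = z u.
  by move=> ux; rewrite /kernel_lift (negbTE ux).
exists (fun u => if u == x then 1 else d u + (e u x)%:R), (kernel_lift S e x z1),
  (kernel_lift S e x z2).
split; [exact: mod2_kernel_lift | exact: mod2_kernel_lift | exists u1 | exists u2 | exists u12];
  by rewrite !lift_off.
Qed.

Theorem path_likeVmod2_corank2 S e : ssrbool.symmetric e -> path_like S e \/ mod2_corank2 S e.
Proof.
move=> sym_e; have [k] := ubnP #|S|; elim: k S e sym_e => // k IH S e sym_e S_lt.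
case: (classic (connected S e)) => conn; last by right; apply: mod2_corank2_disconnected.
have [S_le2|S_gt2] := leqP #|S| 2; first by left; apply: path_like_small.
case: (classic (path_like S e)) => path_S; [by left | right].
have [x xS not_path] := exists_not_path_like_lc sym_e conn S_gt2 path_S.
apply: (mod2_corank2_lift sym_e xS).
have Sx_lt : (#|S :\ x| < k)%N by move: S_lt; rewrite (cardsD1 x S) xS.
by case: (IH _ _ (symmetric_local_complement x sym_e) Sx_lt) => // /not_path.
Qed.

End Mod2Kernel.

Lemma incr_map_inj j n (f : {ffun 'I_j -> 'I_n}) : incr_map f -> injective f.
Proof.
move=> f_incr a b fab; apply: val_inj; apply/eqP; rewrite eqn_leq.
have f_lt (x y : 'I_j) : (x < y)%N -> (f x < f y)%N.
  by move/forallP: f_incr => /(_ x)/forallP/(_ y)/implyP.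
by apply/andP; split; rewrite leqNgt; apply/negP => /f_lt; rewrite fab ltnn.
Qed.

Lemma det_submx_eq0 (R : idomainType) n j (M : 'M[R]_n) (z : 'I_n -> R)
    (f g : 'I_j -> 'I_n) : injective f -> (forall w, \sum_u z u * M u w = 0) ->
  (forall u, u \notin [set f a | a in setT] -> z u = 0) -> (exists a, z (f a) != 0) ->
  \det (\matrix_(a, b) M (f a) (g b)) = 0.
Proof.
move=> f_inj z_ker z_out [a0 nz]; apply/eqP/det0P; exists (\row_a z (f a)).
  by apply/negP => /eqP/rowP/(_ a0); rewrite !mxE; apply/eqP.
apply/rowP => b; rewrite !mxE -[RHS](z_ker (g b)).
rewrite (bigID (mem [set f a | a in setT])) /= [X in _ = _ + X]big1 ?addr0; last first.
  by move=> u /z_out ->; rewrite mul0r.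
rewrite big_imset /=; last by move=> x y _ _; apply: f_inj.
by apply: eq_big => [a|a _]; rewrite ?in_setT // !mxE.
Qed.

Lemma F2_kernel_vanishing n (M : 'M['F_2]_n) (z1 z2 : 'I_n -> 'F_2) r :
  (forall w, \sum_u z1 u * M u w = 0) -> (forall w, \sum_u z2 u * M u w = 0) ->
  (exists u, z1 u != 0) -> (exists u, z2 u != 0) -> (exists u, z1 u != z2 u) ->
  exists z, [/\ forall w, \sum_u z u * M u w = 0, z r = 0 & exists u, z u != 0].
Proof.
move=> k1 k2 [u1 nz1] [u2 nz2] [u12 nz12].
have [z1r|/F2_eq1 z1r] := eqVneq (z1 r) 0; first by exists z1; split=> //; exists u1.
have [z2r|/F2_eq1 z2r] := eqVneq (z2 r) 0; first by exists z2; split=> //; exists u2.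
exists (z1 \+ z2); split=> /=.
- move=> w; rewrite (eq_bigr (fun u => z1 u * M u w + z2 u * M u w)) => [|u _].
    by rewrite big_split /= k1 k2 addr0.
  by rewrite mulrDl.
- by rewrite z1r z2r (addrr_pchar2 F2_pchar).
- by exists u12; apply: contra nz12; rewrite addr_eq0 (oppr_pchar2 F2_pchar).
Qed.

Section Mod2Minors.
Variables (n : nat) (e : rel 'I_n).
Hypothesis sym_e : ssrbool.symmetric e.

Definition mod2_laplacian (d : 'I_n -> 'F_2) : 'M['F_2]_n :=
  \matrix_(u, v) (if u == v then d u else (e u v)%:R).

Definition mod2_eval (d : 'I_n -> 'F_2) : {rmorphism {mpoly int[n]} -> 'F_2} :=
  mmap (intr : {rmorphism int -> 'F_2}) d.

Lemma mod2_eval_minor d j (f g : {ffun 'I_j -> 'I_n}) :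
  mod2_eval d (minor (gen_laplacian e) f g) =
  \det (\matrix_(a, b) mod2_laplacian d (f a) (g b)).
Proof.
rewrite /minor -det_map_mx; congr (\det _); apply/matrixP => a b; rewrite !mxE.
case: eqP => _; first by rewrite /= mmapX mmap1U.
by rewrite rmorphN rmorph_nat (oppr_pchar2 F2_pchar).
Qed.

Lemma critical_ideal_nontrivial j d :
  (forall f g : {ffun 'I_j -> 'I_n}, incr_map f -> incr_map g ->
     \det (\matrix_(a, b) mod2_laplacian d (f a) (g b)) = 0) ->
  ~ critical_ideal_trivial e j.
Proof.
move=> minors0 /(_ 1)[c /(congr1 (mod2_eval d))].
rewrite rmorph1 rmorph_sum big1 ?oner_eq0 // => fg /andP[f_incr g_incr].
by rewrite rmorphM mod2_eval_minor minors0 ?mulr0.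
Qed.

Lemma mod2_laplacian_kernel d z : mod2_kernel setT e d z ->
  forall w, \sum_u z u * mod2_laplacian d u w = 0.
Proof.
move=> [_ z_ker] w; rewrite -[RHS](z_ker w (in_setT w)) (bigD1 w) //= !mxE eqxx mulrC.
congr (_ + _); apply: eq_big => [u|u uw]; first by rewrite in_setT.
by rewrite !mxE (negbTE uw) sym_e mulrC.
Qed.

Lemma mod2_corank2_critical_ideal : mod2_corank2 setT e -> ~ critical_ideal_trivial e n.-1.
Proof.
move=> [d [z1 [z2 [k1 k2 [u1 nz1] nz2 nz12]]]].
apply: (critical_ideal_nontrivial (d := d)) => f g f_incr _.
have f_inj := incr_map_inj f_incr.
have n_gt0 : (0 < n)%N by apply: leq_ltn_trans (ltn_ord u1).
have /cards1P[r Nr] : #|~: [set f a | a in setT]| == 1.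
  have := cardsC [set f a | a in setT]; rewrite card_imset // cardsT !card_ord.
  by move/eqP; rewrite -[X in _ == X](prednK n_gt0) -addn1 eqn_add2l.
have [z [z_ker zr [u nzu]]] := F2_kernel_vanishing r (mod2_laplacian_kernel k1)
  (mod2_laplacian_kernel k2) (ex_intro _ u1 nz1) nz2 nz12.
apply: (det_submx_eq0 g f_inj z_ker) => [w|].
  by rewrite -in_setC Nr => /set1P->.
have : u \notin ~: [set f a | a in setT] by rewrite Nr; apply: contra nzu => /set1P->; rewrite zr.
by rewrite inE negbK => /imsetP[a _ ua]; exists a; rewrite -ua.
Qed.

Lemma critical_ideal_trivial_le j : critical_ideal_trivial e j -> (j <= n.-1)%N.
Proof.
move=> triv; rewrite leqNgt; apply/negP => j_gt.
apply: (critical_ideal_nontrivial (d := fun u => (deg setT e u)%:R)) triv => f g f_incr _.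
have f_inj := incr_map_inj f_incr.
have n_le_j : (n <= j)%N by lia.
have im_f : [set f a | a in setT] = setT.
  by apply/eqP; rewrite eqEcard subsetT (card_imset _ f_inj) !cardsT !card_ord.
have all_closed : closed_in setT e setT by [].
have ones_ker := mod2_kernel_closed sym_e (subxx _) all_closed.
apply: (det_submx_eq0 g f_inj (mod2_laplacian_kernel ones_ker)).
  by move=> u; rewrite im_f in_setT.
have j_gt0 : (0 < j)%N by apply: leq_ltn_trans j_gt.
by exists (Ordinal j_gt0); rewrite in_setT oner_eq0.
Qed.

End Mod2Minors.

Lemma incr_map_lift n (h : 'I_n.+1) : incr_map [ffun a : 'I_n => lift h a].
Proof.
apply/forallP => a; apply/forallP => b; apply/implyP => ab; rewrite !ffunE /= /bump.
by case: (leqP h a); case: (leqP h b) => /=; lia.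
Qed.

Lemma sqr_det_reindex (R : comPzRingType) m (A : 'M[R]_m) (r c : 'I_m -> 'I_m) :
  injective r -> injective c -> \det (\matrix_(a, b) A (r a) (c b)) ^+ 2 = \det A ^+ 2.
Proof.
move=> r_inj c_inj.
have -> : \matrix_(a, b) A (r a) (c b) = row_perm (perm r_inj) (col_perm (perm c_inj) A).
  by apply/matrixP => a b; rewrite !mxE !permE.
by rewrite row_permE col_permE !det_mulmx !det_perm !exprMn !sqrr_sign mul1r mulr1.
Qed.

Section PathMinor.
Variables (m : nat) (e : rel 'I_m.+1) (s : {perm 'I_m.+1}).
Hypothesis iso : forall u v, path_rel (s u) (s v) = e u v.

Local Notation pos_vertex := (s^-1)%g.
Local Notation L := (gen_laplacian e).

Lemma adj_pos_vertex i k : e (pos_vertex i) (pos_vertex k) = path_rel i k.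
Proof. by rewrite -iso !permKV. Qed.

Definition path_submx : 'M[{mpoly int[m.+1]}]_m :=
  \matrix_(i, k) L (pos_vertex (lift ord0 i)) (pos_vertex (widen_ord (leqnSn m) k)).

Lemma det_path_submx : \det path_submx = (-1) ^+ m.
Proof.
rewrite -det_tr det_trig.
  rewrite (eq_bigr (fun _ => -1)) ?prodr_const ?card_ord // => i _.
  rewrite !mxE (inj_eq perm_inj) -(inj_eq val_inj) /= /bump /= add1n eqn_leq ltnn /=.
  by rewrite adj_pos_vertex /path_rel /= /bump add1n eqxx orbT.
apply/forallP => i; apply/forallP => k; apply/implyP => ik.
have lift_neq : (lift ord0 k == widen_ord (leqnSn m) i) = false.
  by apply/eqP => /(congr1 (@nat_of_ord _)); rewrite lift0 /=; lia.
rewrite !mxE (inj_eq perm_inj) lift_neq adj_pos_vertex /path_rel lift0 /=.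
have -> : (k.+2 == i) = false by apply/eqP; lia.
have -> : (i.+1 == k.+1) = false by apply/eqP; lia.
by rewrite oppr0.
Qed.

Lemma path_minor : exists f g : {ffun 'I_m -> 'I_m.+1},
  [/\ incr_map f, incr_map g & minor L f g ^+ 2 = 1].
Proof.
pose r0 := pos_vertex ord0; pose c0 := pos_vertex ord_max.
exists [ffun a => lift r0 a], [ffun b => lift c0 b]; split; try exact: incr_map_lift.
have s_lift_r0 a : s (lift r0 a) != ord0.
  by rewrite -[ord0](permKV s) (inj_eq perm_inj) eq_sym neq_lift.
have s_lift_c0 b : s (lift c0 b) != ord_max.
  by rewrite -[ord_max](permKV s) (inj_eq perm_inj) eq_sym neq_lift.
have row_lt a : ((s (lift r0 a)).-1 < m)%N.
  by have := ltn_ord (s (lift r0 a)); move: (s_lift_r0 a); rewrite -(inj_eq val_inj) /=; lia.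
have col_lt b : (s (lift c0 b) < m)%N.
  by have := ltn_ord (s (lift c0 b)); move: (s_lift_c0 b); rewrite -(inj_eq val_inj) /=; lia.
pose row_pos a := Ordinal (row_lt a); pose col_pos b := Ordinal (col_lt b).
have row_posE a : lift ord0 (row_pos a) = s (lift r0 a).
  apply: val_inj; rewrite /= /bump /= add1n prednK // lt0n.
  by move: (s_lift_r0 a); rewrite -(inj_eq val_inj).
have col_posE b : widen_ord (leqnSn m) (col_pos b) = s (lift c0 b) by apply: val_inj.
have row_pos_inj : injective row_pos.
  by move=> a b /(congr1 (lift ord0)); rewrite !row_posE => /perm_inj/lift_inj.
have col_pos_inj : injective col_pos.
  by move=> a b /(congr1 (widen_ord (leqnSn m))); rewrite !col_posE => /perm_inj/lift_inj.
have -> : minor L [ffun a => lift r0 a] [ffun b => lift c0 b] =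
    \det (\matrix_(a, b) path_submx (row_pos a) (col_pos b)).
  by congr (\det _); apply/matrixP => a b; rewrite !mxE !ffunE row_posE col_posE !permK.
by rewrite sqr_det_reindex // det_path_submx sqrr_sign.
Qed.

End PathMinor.

Lemma critical_ideal_trivial_of_minor n (e : rel 'I_n) j (f g : {ffun 'I_j -> 'I_n}) :
  incr_map f -> incr_map g -> minor (gen_laplacian e) f g ^+ 2 = 1 ->
  critical_ideal_trivial e j.
Proof.
move=> f_incr g_incr sq1 p.
exists (fun fg => if fg == (f, g) then p * minor (gen_laplacian e) f g else 0).
rewrite (bigD1 (f, g)) /= ?f_incr ?g_incr // eqxx big1 ?addr0.
  by rewrite -mulrA -expr2 sq1 mulr1.
by move=> fg /andP[_ /negbTE ->]; rewrite mul0r.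
Qed.

Lemma critical_ideal_trivial0 n (e : rel 'I_n) : critical_ideal_trivial e 0.
Proof.
have card0 : #|'I_0| = 0%N by rewrite card_ord.
have incr0 : incr_map (ffun0 card0 : {ffun 'I_0 -> 'I_n}) by apply/forallP => [[]].
by apply: (critical_ideal_trivial_of_minor incr0 incr0); rewrite /minor det_mx00 expr1n.
Qed.

Lemma path_critical_ideal_trivial n (e : rel 'I_n) :
  graph_iso e (@path_rel n) -> critical_ideal_trivial e n.-1.
Proof.
case: n e => [|m] e [s iso]; first exact: critical_ideal_trivial0.
by have [f [g [f_incr g_incr sq1]]] := path_minor iso; exact: critical_ideal_trivial_of_minor sq1.
Qed.

Theorem corollary3p9 (n : nat) (e : rel 'I_n) :
  simple_graph e ->
  (is_algebraic_corank e (n - 1) <-> graph_iso e (@path_rel n)).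
Proof.
move=> graph_e; have sym_e := graph_e.1; rewrite subn1; split.
  move=> [triv _]; have [path_e|corank2] := path_likeVmod2_corank2 setT sym_e.
    exact: path_like_graph_iso.
  by case: (mod2_corank2_critical_ideal sym_e corank2).
move=> iso; split; first exact: path_critical_ideal_trivial.
by move=> j; apply: critical_ideal_trivial_le.
Qed.
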